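(* Let $N=2^{L}$ with $L=L_1+L_2$, $L_1,L_2\ge1$, and split the index set $I=\{1,\dots,N\}$ into $n_2=2^{L_2}$ consecutive non-overlapping subintervals $I=\bigcup_{k=1}^{n_2}I_k$, each of length $n_1=2^{L_1}$. Let $\mathbf x_0\in\mathbb R^{n_1}$ have QTT rank $r_0$. For $k=1,\dots,n_2$ define $\mathbf x_k\in\mathbb R^N$ by: the restriction of $\mathbf x_k$ to $I_k$ equals $\mathbf x_0$, and $\mathbf x_k(i)=0$ for $i\in I\setminus I_k$. Let $\mathbf x=\mathbf x_1+\dots+\mathbf x_{n_2}$. Then for every $F\in\mathbb R^N$, $$\operatorname{rank}_{QTT}(F\odot\mathbf x)\le\operatorname{rank}_{QTT}(F)\,r_0.$$
   Context: $\odot$ denotes the entrywise (Hadamard) product of vectors. QTT (quantics tensor train) rank: a vector $\mathbf y\in\mathbb R^{2^m}$ is reshaped into a tensor $Y\in\mathbb R^{2\times\cdots\times2}$ of order $m$ via the binary coding $i-1=\sum_{\ell=1}^m(j_\ell-1)2^{\ell-1}$, $j_\ell\in\{1,2\}$, i.e. $Y(j_1,\dots,j_m)=\mathbf y(i)$. The TT ranks of $Y$ are $r_\ell=\operatorname{rank}$ of the unfolding matrix with rows indexed by $(j_1,\dots,j_\ell)$ and columns by $(j_{\ell+1},\dots,j_m)$, $\ell=1,\dots,m-1$; $\operatorname{rank}_{QTT}(\mathbf y)=\max_\ell r_\ell$. *)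

From mathcomp Require Import all_boot all_algebra.
Set Implicit Arguments. Unset Strict Implicit. Unset Printing Implicit Defensive.
Import GRing.Theory Num.Theory.
Local Open Scope ring_scope.

(* A vector y in R^(2^m) is a function 'I_(2^m) -> R; indices are 0-based:
   0-based index i corresponds to the paper's i+1. *)

(* Extension of a finite vector to nat indices (zero outside the range);
   only ever evaluated at in-range indices below. *)
Definition vext (R : nzRingType) (n : nat) (y : 'I_n -> R) (j : nat) : R :=
  odflt 0 (omap y (insub j)).

(* The l-th QTT unfolding of y in R^(2^m): rows indexed by (j_1..j_l), i.e. the
   l low-order bits a < 2^l, columns by (j_(l+1)..j_m), i.e. b < 2^(m-l);
   entry = y(a + 2^l b)   (binary coding i-1 = sum (j_k-1) 2^(k-1)). *)
Definition qtt_unfold (R : nzRingType) (m : nat) (l : 'I_m.+1) (y : 'I_(2^m) -> R)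
  : 'M[R]_(2^l, 2^(m-l)) :=
  \matrix_(a < 2^l, b < 2^(m-l)) vext y (a + 2^l * b)%N.

(* The boundary unfoldings l = 0 and
   l = m (rank 1 if y <> 0, 0 if y = 0) are included; this agrees with
   max_{l=1..m-1} r_l whenever m >= 2 and gives the standard value 1 for
   nonzero vectors when m = 1. *)
Definition qtt_rank (R : fieldType) (m : nat) (y : 'I_(2^m) -> R) : nat :=
  \max_(l < m.+1) \rank (qtt_unfold l y).

Definition hadamard (R : nzRingType) (n : nat) (u v : 'I_n -> R) : 'I_n -> R :=
  fun i => u i * v i.

(* x_k (k = 0..n2-1, 0-based): equals x0 on I_k = [k n1, (k+1) n1), zero elsewhere *)
Definition block_vec (R : nzRingType) (L1 L2 : nat) (x0 : 'I_(2^L1) -> R) (k : nat)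
  : 'I_(2^(L1 + L2)) -> R :=
  fun i => if ((k * 2^L1 <= i) && (i < k.+1 * 2^L1))%N
           then vext x0 (i - k * 2^L1)%N else 0.

Definition periodic_vec (R : nzRingType) (L1 L2 : nat) (x0 : 'I_(2^L1) -> R)
  : 'I_(2^(L1 + L2)) -> R :=
  fun i => \sum_(k < 2^L2) @block_vec R L1 L2 x0 k i.

(** The l-th unfolding of F ⊙ x is the entrywise product of the l-th
    unfoldings of F and of x, and the rank of an entrywise product is at most
    the product of the ranks: writing A = C D with C having rank A columns,
    A ⊙ B = Σ_i diag(C_i) B diag(D_i).  It remains to bound the unfolding
    ranks of x by r_0.  Since x(j) = x_0(j mod n_1), every entry of the l-th
    unfolding of x is an entry of the (min l L_1)-th unfolding of x_0, so the
    former is a submatrix of the latter. *)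

From mathcomp Require Import all_boot all_algebra zify.
Set Implicit Arguments. Unset Strict Implicit. Unset Printing Implicit Defensive.
Import GRing.Theory Num.Theory.
Local Open Scope ring_scope.

Section MatrixRank.
Variable R : fieldType.

Lemma mxrank_mxsub m n m' n' (f : 'I_m' -> 'I_m) (g : 'I_n' -> 'I_n)
    (A : 'M[R]_(m, n)) :
  (\rank (mxsub f g A) <= \rank A)%N.
Proof.
have -> : mxsub f g A = rowsub f 1%:M *m (rowsub g A^T)^T.
  by rewrite -rowsubE; apply/matrixP=> i j; rewrite !mxE.
apply: leq_trans (mxrankM_maxr _ _) _.
by rewrite mxrank_tr rowsubE -[leqRHS]mxrank_tr mxrankM_maxr.
Qed.

Lemma mxrank_sum (I : Type) (r : seq I) (P : pred I) m n (F : I -> 'M[R]_(m, n)) :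
  (\rank (\sum_(i <- r | P i) F i)%R <= \sum_(i <- r | P i) \rank (F i))%N.
Proof.
elim/big_ind2: _ => [|A a B b rA rB //|//]; first by rewrite mxrank0.
exact: leq_trans (mxrank_add A B) (leq_add rA rB).
Qed.

Lemma mxrank_hadamard m n (A B : 'M[R]_(m, n)) :
  (\rank (map2_mx *%R A B) <= \rank A * \rank B)%N.
Proof.
set C := col_base A; set D := row_base A.
have -> : map2_mx *%R A B =
    (\sum_(i < \rank A) diag_mx (col i C)^T *m B *m diag_mx (row i D))%R.
  apply/matrixP=> a b; rewrite summxE mxE -{1}(mulmx_base A) mxE big_distrl.
  by apply: eq_bigr => i _; rewrite mul_mx_diag mxE mul_diag_mx !mxE mulrAC.
apply: leq_trans (mxrank_sum _ _ _) _.
rewrite -[X in (_ <= X * _)%N]card_ord -sum_nat_const; apply: leq_sum => i _.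
exact: leq_trans (mxrankM_maxl _ _) (mxrankM_maxr _ _).
Qed.

End MatrixRank.

Lemma unfold_index_lt m l a b : (l <= m)%N -> (a < 2 ^ l)%N -> (b < 2 ^ (m - l))%N ->
  (a + 2 ^ l * b < 2 ^ m)%N.
Proof.
move=> lm ha hb; rewrite -(subnKC lm) expnD.
move: ha hb; set P := (2 ^ l)%N; set Q := (2 ^ (m - l))%N => ha hb; nia.
Qed.

Lemma unfold_index_modn n l a b : (a < 2 ^ l)%N ->
  ((a + 2 ^ l * b) %% 2 ^ n
   = a %% 2 ^ minn l n + 2 ^ minn l n * (b %% 2 ^ (n - minn l n)))%N.
Proof.
move=> ha; case: (leqP l n) => [ln | nl].
  rewrite (modn_small ha) -{1}(subnKC ln) expnD.
  rewrite {1}(divn_eq b (2 ^ (n - l))).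
  have hr : (b %% 2 ^ (n - l) < 2 ^ (n - l))%N by rewrite ltn_pmod ?expn_gt0.
  move: ha hr; set P := (2 ^ l)%N; set Q := (2 ^ (n - l))%N.
  set q := (b %/ Q)%N; set r := (b %% Q)%N => ha hr.
  rewrite (_ : a + P * (q * Q + r) = q * (P * Q) + (a + P * r))%N; last by nia.
  by rewrite modnMDl modn_small //; nia.
rewrite subnn modn1 muln0 addn0.
by rewrite -(subnKC (ltnW nl)) expnD -mulnA addnC [(_ * (_ * b))%N]mulnC modnMDl.
Qed.

Section QTTRank.
Variable R : fieldType.

Lemma vext_hadamard n (u v : 'I_n -> R) j :
  vext (hadamard u v) j = vext u j * vext v j.
Proof. by rewrite /vext; case: insubP => [k _ _|_] /=; rewrite ?mul0r. Qed.

Lemma vext_periodic_vec L1 L2 (x0 : 'I_(2 ^ L1) -> R) j : (j < 2 ^ (L1 + L2))%N ->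
  vext (@periodic_vec R L1 L2 x0) j = vext x0 (j %% 2 ^ L1).
Proof.
move=> hj; rewrite /vext insubT /= /periodic_vec.
have n1_gt0 : (0 < 2 ^ L1)%N by rewrite expn_gt0.
have hk : (j %/ 2 ^ L1 < 2 ^ L2)%N by rewrite ltn_divLR // mulnC -expnD.
rewrite (bigD1 (Ordinal hk)) //= big1 ?addr0.
  rewrite /block_vec /= leq_divM ltn_ceil //=.
  by rewrite {1}(divn_eq j (2 ^ L1)) addKn.
move=> k /eqP neq_k; rewrite /block_vec; case: ifP => // /andP [lo hi].
case: neq_k; apply: val_inj => /=; apply/eqP; rewrite eqn_leq.
by rewrite leq_divRL // lo /= -ltnS ltn_divLR.
Qed.

Lemma qtt_unfold_hadamard m (l : 'I_m.+1) (u v : 'I_(2 ^ m) -> R) :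
  qtt_unfold l (hadamard u v) = map2_mx *%R (qtt_unfold l u) (qtt_unfold l v).
Proof. by apply/matrixP => a b; rewrite !mxE vext_hadamard. Qed.

Lemma leq_rank_qtt m (l : 'I_m.+1) (y : 'I_(2 ^ m) -> R) :
  (\rank (qtt_unfold l y) <= qtt_rank y)%N.
Proof. exact: (@leq_bigmax _ (fun k : 'I_m.+1 => \rank (qtt_unfold k y)) l). Qed.

Lemma rank_qtt_unfold_periodic m n (y : 'I_(2 ^ m) -> R) (z : 'I_(2 ^ n) -> R)
    (l : 'I_n.+1) :
  (forall j, j < 2 ^ n -> vext z j = vext y (j %% 2 ^ m))%N ->
  (\rank (qtt_unfold l z) <= qtt_rank y)%N.
Proof.
move=> zy; have ln : (l <= n)%N by rewrite -ltnS.
have hk : (minn l m < m.+1)%N by rewrite ltnS geq_minr.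
pose k := Ordinal hk.
have row_lt (a : 'I_(2 ^ l)) : (a %% 2 ^ k < 2 ^ k)%N by rewrite ltn_pmod ?expn_gt0.
have col_lt (b : 'I_(2 ^ (n - l))) : (b %% 2 ^ (m - k) < 2 ^ (m - k))%N.
  by rewrite ltn_pmod ?expn_gt0.
have -> : qtt_unfold l z = mxsub (fun a => Ordinal (row_lt a))
    (fun b => Ordinal (col_lt b)) (qtt_unfold k y).
  apply/matrixP => a b; rewrite !mxE /= zy ?unfold_index_modn //.
  exact: unfold_index_lt.
exact: leq_trans (mxrank_mxsub _ _ _) (leq_rank_qtt _ _).
Qed.

End QTTRank.

(* The bound holds for all L1, L2. *)
Theorem lemma4p2 (R : realFieldType) (L1 L2 : nat) (hL1 : (1 <= L1)%N) (hL2 : (1 <= L2)%N)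
  (x0 : 'I_(2^L1) -> R) (F : 'I_(2^(L1 + L2)) -> R) :
  (qtt_rank (hadamard F (@periodic_vec R L1 L2 x0)) <= qtt_rank F * qtt_rank x0)%N.
Proof.
apply/bigmax_leqP => l _; rewrite qtt_unfold_hadamard.
apply: leq_trans (mxrank_hadamard _ _) (leq_mul (leq_rank_qtt _ _) _).
exact/rank_qtt_unfold_periodic/vext_periodic_vec.
Qed.
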